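(* Suppose $n\ge 2$, all buyers are additive, and the seller uses the max tie-breaking rule. Then for any selling-order function, the sequential first-price auction has a pure optimistic conservative subgame perfect equilibrium, and in every pure optimistic conservative subgame perfect equilibrium each item $j$ is allocated to a buyer $w\in\arg\max_i v_{i,j}$ at price $\max_{i\neq w}v_{i,j}$ (the second-highest valuation).
   Context: Setting: a set $M$ of $m$ items and a set $N$ of $n$ buyers; buyer $i$ is additive with values $v_{i,j}\ge 0$, $v_i(S)=\sum_{j\in S}v_{i,j}$, and quasi-linear utility. Items are sold one at a time, each by a sealed-bid first-price auction without reserve price: each buyer submits a nonnegative bid, a highest bidder wins and pays his bid. The seller fixes a selling-order function (the next item depends on the allocation of items sold so far) and a tie-breaking rule. Max tie-breaking rule: when a set $T$ of buyers tie with the highest bid on item $j$, the item goes to a buyer in $\arg\max_{i\in T}v_{i,j}$. Full information. Game-tree nodes are identified with the allocation of the items sold so far (which buyer won which item), and strategies depend on history only through this allocation. A pure subgame perfect equilibrium (SPE) is a profile of pure strategies that is a Nash equilibrium in every subgame. Optimistic conservative bidding: at a node $h$ where item $j$ is sold and buyer $i$ holds the set $X_i(h)$, let $U_i(h)$ be buyer $i$'s utility from the items sold from $h$ onward (increase in his value minus his payments for those items) when everybody follows the profile from $h$, and let $h^{j\to i}$ be the node reached when $j$ is allocated to $i$. A bid $b$ of buyer $i$ on $j$ at $h$ is optimistic conservative if $v_i(X_i(h)\cup\{j\})-v_i(X_i(h))-b+U_i(h^{j\to i})\ge U_i(h)$, i.e. winning with this bid would not leave $i$ worse off than the equilibrium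 path. A pure optimistic conservative SPE is a pure SPE in which every bid at every node (on or off the equilibrium path) is optimistic conservative. *)

From HB Require Import structures.
From mathcomp Require Import all_boot all_order all_algebra.
From mathcomp Require Import reals.
Set Implicit Arguments. Unset Strict Implicit. Unset Printing Implicit Defensive.
Import Order.TTheory GRing.Theory Num.Theory.
Local Open Scope ring_scope.

Section Auction.
Variables (R : realType) (N M : finType).
(* v i j = value of buyer i for item j (additive valuations) *)
Variable v : N -> M -> R.

(* A game-tree node = allocation of the items sold so far:
   h j = Some i if item j was sold to buyer i, None if j is unsold. *)
Definition alloc := {ffun M -> option N}.
Definition root_node : alloc := [ffun _ => None].
Definition unsold (h : alloc) : {set M} := [set j | h j == None].
Definition upd (h : alloc) (j : M) (i : N) : alloc :=
  [ffun k => if k == j then Some i else h k].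

Definition valid_order (ord : alloc -> M) : Prop :=
  forall h, unsold h != set0 -> ord h \in unsold h.

(* tie-breaking rule tb h j T : winner of item j at node h among the set T of
   tied highest bidders.  Max tie-breaking rule: *)
Definition max_tiebreak (tb : alloc -> M -> {set N} -> N) : Prop :=
  forall h j T, T != set0 ->
    tb h j T \in T /\ (forall i, i \in T -> v i j <= v (tb h j T) j).

Variables (ord : alloc -> M) (tb : alloc -> M -> {set N} -> N).

(* pure strategy profile: b i h = bid of buyer i on item ord h at node h *)
Definition profile := N -> alloc -> R.
Definition valid_strategy (s : alloc -> R) : Prop := forall h, 0 <= s h.
Definition valid_profile (b : profile) : Prop := forall i, valid_strategy (b i).

Definition top_bidders (b : profile) (h : alloc) : {set N} :=
  [set i | [forall k, b k h <= b i h]].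
Definition winner (b : profile) (h : alloc) : N :=
  tb h (ord h) (top_bidders b h).

(* outcome from node h when everybody follows b:
   sequence of (item, winner, price), one entry per remaining item *)
Fixpoint outcome_fuel (b : profile) (k : nat) (h : alloc) : seq (M * N * R) :=
  if k is k'.+1 then
    let j := ord h in let w := winner b h in
    (j, w, b w h) :: outcome_fuel b k' (upd h j w)
  else [::].
Definition outcome (b : profile) (h : alloc) := outcome_fuel b #|unsold h| h.

Definition U (b : profile) (i : N) (h : alloc) : R :=
  \sum_(x <- outcome b h | x.1.2 == i) (v i x.1.1 - x.2).

Inductive reachable : alloc -> Prop :=
| reach_root : reachable root_node
| reach_step h i : reachable h -> unsold h != set0 ->
    reachable (upd h (ord h) i).

Definition set_strat (b : profile) (i : N) (s : alloc -> R) : profile :=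
  fun k => if k == i then s else b k.

Definition NE_at (b : profile) (h : alloc) : Prop :=
  forall i (s : alloc -> R), valid_strategy s ->
    U (set_strat b i s) i h <= U b i h.

Definition SPE (b : profile) : Prop :=
  valid_profile b /\ forall h, reachable h -> NE_at b h.

(* every bid at every node is optimistic conservative; by additivity
   v_i(X_i(h) u {j}) - v_i(X_i(h)) = v i j since j is unsold at h *)
Definition optimistic_conservative (b : profile) : Prop :=
  forall h, reachable h -> unsold h != set0 -> forall i,
    v i (ord h) - b i h + U b i (upd h (ord h) i) >= U b i h.

Definition OC_SPE (b : profile) : Prop := SPE b /\ optimistic_conservative b.

End Auction.

(* Let [rival_value i j] be the highest valuation of item j among the buyers
   other than i, and [surplus i j = max 0 (v i j - rival_value i j)].  If every
   buyer bids his value capped at his rival value, the highest-value buyer of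
   every item wins it at the second-highest value, so from any node a buyer's
   utility is his total surplus on the unsold items; no unilateral deviation
   can beat that, since winning an item never costs less than the rival value.
   Conversely, by backward induction on the number of unsold items, in any
   optimistic conservative SPE the continuation utilities are these surplus
   sums, which do not depend on who wins the current item.  Each stage is then
   a one-shot first-price auction: conservativeness keeps the losers' bids
   below their values, a loser with value above the price could profitably
   outbid the winner, the winner could profitably shade a price above all the
   other bids, and he would rather lose than pay more than his value. *)
From Pilot Require Import Defs.
From HB Require Import structures.
From mathcomp Require Import all_boot all_order all_algebra.
From mathcomp Require Import reals.
From mathcomp Require Import lra.
Import Order.TTheory GRing.Theory Num.Theory.
Local Open Scope ring_scope.
Set Implicit Arguments. Unset Strict Implicit. Unset Printing Implicit Defensive.

Section SequentialFirstPriceAuction.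
Variables (R : realType) (N M : finType) (v : N -> M -> R).
Variables (ord : alloc N M -> M) (tb : alloc N M -> M -> {set N} -> N).
Hypothesis two_buyers : (1 < #|N|)%N.
Hypothesis v_ge0 : forall i j, 0 <= v i j.
Hypothesis ord_valid : valid_order ord.
Hypothesis tb_max : max_tiebreak v tb.

Implicit Types (b : profile R N M) (h : alloc N M).

Local Notation winner := (winner ord tb).
Local Notation outcome := (outcome ord tb).
Local Notation U := (U v ord tb).

Lemma exists_other_buyer (i : N) : exists k, k != i.
Proof.
have : (0 < #|predC1 i|)%N by rewrite cardC1; move: two_buyers; case: #|N| => [|[]].
by case/card_gt0P=> k; exists k.
Qed.

Definition rival_value (i : N) (j : M) : R := \big[Order.max/0]_(k | k != i) v k j.
Definition surplus (i : N) (j : M) : R := Order.max 0 (v i j - rival_value i j).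
Definition surplus_sum (i : N) (S : {set M}) : R := \sum_(j in S) surplus i j.

Lemma le_rival_value i j k : k != i -> v k j <= rival_value i j.
Proof. by move=> ki; apply: le_bigmax_cond. Qed.

Lemma rival_value_attained i j : exists2 k, k != i & rival_value i j = v k j.
Proof.
have [k ki] := exists_other_buyer i; rewrite /rival_value.
have [k0 k0i ->] := @eq_bigmax _ R N 0 k (fun x => x != i) (fun x => v x j) ki
  (fun x _ => v_ge0 x j).
by exists k0.
Qed.

Lemma rival_value_ge0 i j : 0 <= rival_value i j.
Proof. by have [k _ ->] := rival_value_attained i j. Qed.

Lemma surplus_ge0 i j : 0 <= surplus i j.
Proof. by rewrite /surplus le_max lexx. Qed.

Lemma surplus_eq0 i j : v i j <= rival_value i j -> surplus i j = 0.
Proof. by move=> le_vo; rewrite /surplus max_l // subr_le0. Qed.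

Lemma surplus_rival_le i j :
  rival_value i j <= v i j -> surplus i j = v i j - rival_value i j.
Proof. by move=> le_ov; rewrite /surplus max_r // subr_ge0. Qed.

Lemma subr_min_rival_value i j :
  v i j - Order.min (v i j) (rival_value i j) = surplus i j.
Proof.
have [le_vo|lt_ov] := leP (v i j) (rival_value i j).
  by rewrite subrr surplus_eq0.
by rewrite surplus_rival_le // ltW.
Qed.

Lemma unsold_upd h j i : unsold (upd h j i) = unsold h :\ j.
Proof. by apply/setP=> x; rewrite !inE ffunE; case: (x =P j). Qed.

Lemma card_unsold_upd h k : unsold h != set0 ->
  #|unsold h| = #|unsold (upd h (ord h) k)|.+1.
Proof. by move=> ne; rewrite unsold_upd (cardsD1 (ord h)) (ord_valid ne). Qed.

Lemma unsold_ind (P : alloc N M -> Prop) :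
  (forall h, unsold h = set0 -> P h) ->
  (forall h, unsold h != set0 -> (forall k, P (upd h (ord h) k)) -> P h) ->
  forall h, P h.
Proof.
move=> P0 PS h; have [n] := ubnP #|unsold h|; elim: n h => // n IH h lt_hn.
have [E|ne] := eqVneq (unsold h) set0; first exact: P0.
by apply: (PS _ ne) => k; apply: IH; rewrite -ltnS -(card_unsold_upd k ne).
Qed.

Lemma outcome_nil b h : unsold h = set0 -> outcome b h = [::].
Proof. by move=> E; rewrite /Defs.outcome E cards0. Qed.

Lemma outcome_cons b h : unsold h != set0 ->
  outcome b h = (ord h, winner b h, b (winner b h) h)
                  :: outcome b (upd h (ord h) (winner b h)).
Proof. by move=> ne; rewrite /Defs.outcome (card_unsold_upd (winner b h) ne). Qed.

Lemma U_nil b i h : unsold h = set0 -> U b i h = 0.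
Proof. by move=> E; rewrite /Defs.U outcome_nil // big_nil. Qed.

Lemma U_cons b i h : unsold h != set0 ->
  U b i h = (if winner b h == i then v i (ord h) - b (winner b h) h else 0)
            + U b i (upd h (ord h) (winner b h)).
Proof.
move=> ne; rewrite /Defs.U outcome_cons // big_cons /=.
by case: eqP => _ //; rewrite add0r.
Qed.

Lemma surplus_sum_nil i h : unsold h = set0 -> surplus_sum i (unsold h) = 0.
Proof. by move=> ->; rewrite /surplus_sum big_set0. Qed.

Lemma surplus_sum_cons i h k : unsold h != set0 ->
  surplus_sum i (unsold h) = surplus i (ord h) + surplus_sum i (unsold (upd h (ord h) k)).
Proof.
move=> ne; rewrite unsold_upd /surplus_sum (bigD1 (ord h)) ?(ord_valid ne) //=.
by congr (_ + _); apply: eq_bigl => x; rewrite !inE andbC.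
Qed.

Lemma mem_outcome b h j : j \in unsold h -> exists k p, (j, k, p) \in outcome b h.
Proof.
elim/unsold_ind: h => [h ->|h ne IH]; first by rewrite inE.
rewrite outcome_cons //; case: (j =P ord h) => [->|/eqP nj ju].
  by exists (winner b h), (b (winner b h) h); rewrite mem_head.
have [|k [p Hp]] := IH (winner b h); first by rewrite unsold_upd in_setD1 nj ju.
by exists k, p; rewrite in_cons Hp orbT.
Qed.

Lemma outcome_fuel_eq n h b b' :
  (forall h', unsold h' \subset unsold h -> forall k, b k h' = b' k h') ->
  outcome_fuel ord tb b n h = outcome_fuel ord tb b' n h.
Proof.
elim: n h => [//|n IH] h eq_bb' /=.
have -> : winner b h = winner b' h.
  congr (tb _ _ _); apply/setP=> x; rewrite !inE.
  by apply: eq_forallb => y; rewrite !eq_bb'.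
rewrite eq_bb' // IH // => h' sub k; apply: eq_bb'.
by apply: subset_trans sub _; rewrite unsold_upd subD1set.
Qed.

Lemma top_bidders_neq0 b h : top_bidders b h != set0.
Proof.
have /card_gt0P [i0 _] : (0 < #|N|)%N by apply: ltn_trans two_buyers.
have [k _ Hk] := @arg_maxP _ R N i0 xpredT (fun k => b k h) isT.
by apply/set0Pn; exists k; rewrite inE; apply/forallP => x; exact: Hk.
Qed.

Lemma winner_bid_max b h k : b k h <= b (winner b h) h.
Proof.
have [/[!inE] /forallP top _] := tb_max h (ord h) (top_bidders_neq0 b h).
exact: top.
Qed.

Lemma winner_value_max b h i : i \in top_bidders b h ->
  v i (ord h) <= v (winner b h) (ord h).
Proof. exact: (tb_max h (ord h) (top_bidders_neq0 b h)).2. Qed.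

Lemma winner_strict b h i : (forall k, k != i -> b k h < b i h) -> winner b h = i.
Proof.
move=> lt_bi; apply/eqP/negPn/negP => /lt_bi.
by rewrite ltNge winner_bid_max.
Qed.

Definition capped_bids : profile R N M :=
  fun i h => Order.min (v i (ord h)) (rival_value i (ord h)).

Lemma capped_bids_loser h i : winner capped_bids h != i ->
  v i (ord h) <= rival_value i (ord h).
Proof.
move=> wi; rewrite leNgt; apply/negP => lt_ov.
have bi : capped_bids i h = rival_value i (ord h) by rewrite /capped_bids min_r // ltW.
have top : i \in top_bidders capped_bids h.
  rewrite inE; apply/forallP => k; rewrite bi.
  have [->|ki] := eqVneq k i; first by rewrite -bi.
  by rewrite ge_min le_rival_value ?orbT.
have := winner_value_max top; rewrite leNgt.
by rewrite (le_lt_trans (le_rival_value _ wi)) // eq_sym.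
Qed.

Lemma U_capped_bids i h : U capped_bids i h = surplus_sum i (unsold h).
Proof.
elim/unsold_ind: h => [h E|h ne IH]; first by rewrite U_nil ?surplus_sum_nil.
rewrite U_cons // (surplus_sum_cons i (winner capped_bids h) ne) IH.
congr (_ + _); have [<-|wi] := eqVneq (winner capped_bids h) i.
  exact: subr_min_rival_value.
by rewrite surplus_eq0 // capped_bids_loser.
Qed.

(* A buyer who wins an item against capped bids pays at least his rival value. *)
Lemma U_le_surplus_sum b i h : (forall k, k != i -> b k = capped_bids k) ->
  U b i h <= surplus_sum i (unsold h).
Proof.
move=> others; elim/unsold_ind: h => [h E|h ne IH].
  by rewrite U_nil ?surplus_sum_nil.
rewrite U_cons // (surplus_sum_cons i (winner b h) ne) lerD //.
case: eqP => [wi|_]; last exact: surplus_ge0.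
rewrite -subr_min_rival_value lerB // wi.
have [k ki ->] := rival_value_attained i (ord h).
have := winner_bid_max b h k; rewrite wi others //; apply: le_trans.
by rewrite le_min !ge_min lexx le_rival_value 1?eq_sym ?orbT.
Qed.

Lemma capped_bids_OC_SPE : OC_SPE v ord tb capped_bids.
Proof.
split; first split.
- by move=> i h; rewrite le_min v_ge0 rival_value_ge0.
- move=> h _ i s _; rewrite U_capped_bids; apply: U_le_surplus_sum => k ki.
  by rewrite /set_strat (negbTE ki).
- move=> h _ ne i; rewrite !U_capped_bids (surplus_sum_cons i i ne).
  by rewrite -subr_min_rival_value.
Qed.

Definition deviate b i (x : R) h : profile R N M :=
  set_strat b i (fun h' => if h' == h then x else b i h').

Lemma deviate_at b i x h k : deviate b i x h k h = if k == i then x else b k h.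
Proof. by rewrite /deviate /set_strat; case: (k =P i) => _ //=; rewrite eqxx. Qed.

Lemma U_deviate b i x h : unsold h != set0 ->
  U (deviate b i x h) i h =
  (if winner (deviate b i x h) h == i then v i (ord h) - x else 0)
  + U b i (upd h (ord h) (winner (deviate b i x h) h)).
Proof.
move=> ne; rewrite U_cons //; congr (_ + _).
  by case: eqP => // ->; rewrite deviate_at eqxx.
rewrite /Defs.U /Defs.outcome (@outcome_fuel_eq _ _ _ b) // => h' sub k.
have nh : h' != h.
  apply/eqP => E; move: sub; rewrite E unsold_upd => /subsetP /(_ _ (ord_valid ne)).
  by rewrite !inE eqxx.
by rewrite /deviate /set_strat; case: (k =P i) => [->|_] //=; rewrite (negbTE nh).
Qed.

Section OneStage.
Variable b : profile R N M.
Hypothesis b_OC_SPE : OC_SPE v ord tb b.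
Variable h : alloc N M.
Hypothesis h_reachable : reachable ord h.
Hypothesis h_unsold : unsold h != set0.
Hypothesis U_children :
  forall i k, U b i (upd h (ord h) k) = surplus_sum i (unsold h :\ ord h).

Local Notation j := (ord h).
Local Notation w := (winner b h).
Local Notation p := (b (winner b h) h).

Lemma bid_ge0 k : 0 <= b k h.
Proof. by case: b_OC_SPE => -[valid _] _; apply: valid. Qed.

Lemma U_stage i :
  U b i h = (if w == i then v i j - p else 0) + surplus_sum i (unsold h :\ j).
Proof. by rewrite U_cons // U_children. Qed.

Lemma stage_deviation_le i x : 0 <= x ->
  (if winner (deviate b i x h) h == i then v i j - x else 0)
    <= (if w == i then v i j - p else 0).
Proof.
move=> x_ge0; case: b_OC_SPE => -[valid spe] _.
have := spe h h_reachable i (fun h' => if h' == h then x else b i h').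
rewrite -/(deviate b i x h) U_deviate // U_stage U_children lerD2r; apply.
by move=> h'; case: eqP => // _; apply: valid.
Qed.

Lemma loser_bid_le_value i : i != w -> b i h <= v i j.
Proof.
move=> iw; case: b_OC_SPE => _ /(_ h h_reachable h_unsold i).
by rewrite U_stage U_children eq_sym (negbTE iw) add0r lerDr subr_ge0.
Qed.

Lemma loser_value_le_price i : i != w -> v i j <= p.
Proof.
move=> iw; rewrite leNgt; apply/negP => lt_pv.
pose x := (p + v i j) / 2.
have wi : winner (deviate b i x h) h = i.
  apply: winner_strict => k ki; rewrite !deviate_at eqxx (negbTE ki).
  by apply: le_lt_trans (winner_bid_max b h k) _; rewrite /x; lra.
have := stage_deviation_le i (x := x); rewrite wi eqxx eq_sym (negbTE iw) /x.
have := bid_ge0 w; lra.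
Qed.

(* Otherwise the winner could shade his bid to the midpoint with the next one. *)
Lemma price_is_losing_bid : exists2 i, i != w & b i h = p.
Proof.
have [k0 k0w] := exists_other_buyer w.
case: (boolP [exists i, (i != w) && (b i h == p)]).
  by case/existsP => i /andP [iw /eqP]; exists i.
rewrite negb_exists => /forallP ne_p.
have lt_bp k : k != w -> b k h < p.
  by move=> kw; rewrite lt_neqAle winner_bid_max andbT; have := ne_p k; rewrite kw.
pose m := \big[Order.max/0]_(k | k != w) b k h.
have le_bm k : k != w -> b k h <= m by move=> kw; apply: le_bigmax_cond.
have lt_mp : m < p.
  by apply/bigmax_ltP; split; [exact: le_lt_trans (bid_ge0 k0) (lt_bp _ k0w)|].
have m_ge0 : 0 <= m by apply: le_trans (le_bm _ k0w); exact: bid_ge0.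
pose x := (m + p) / 2.
have ww : winner (deviate b w x h) h = w.
  apply: winner_strict => k kw; rewrite !deviate_at eqxx (negbTE kw).
  by apply: le_lt_trans (le_bm _ kw) _; rewrite /x; lra.
by have := stage_deviation_le w (x := x); rewrite ww eqxx /x; lra.
Qed.

Lemma price_le_winner_value : p <= v w j.
Proof.
have := stage_deviation_le w (lexx 0); rewrite eqxx.
by case: eqP => _; have := v_ge0 w j; lra.
Qed.

Lemma price_eq_rival_value : rival_value w j = p.
Proof.
apply/le_anti/andP; split.
  by apply/bigmax_leP; split; [exact: bid_ge0 | move=> k; apply: loser_value_le_price].
have [i iw <-] := price_is_losing_bid.
apply: le_trans (le_rival_value j iw).
exact: loser_bid_le_value.
Qed.

Lemma U_stage_surplus_sum i : U b i h = surplus_sum i (unsold h).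
Proof.
rewrite U_stage (surplus_sum_cons i w h_unsold) unsold_upd; congr (_ + _).
have [<-|iw] := eqVneq w i.
  by rewrite surplus_rival_le price_eq_rival_value // price_le_winner_value.
rewrite surplus_eq0 // (le_trans (loser_value_le_price _)) 1?eq_sym //.
exact: le_trans price_le_winner_value (le_rival_value _ _).
Qed.

End OneStage.

Lemma OC_SPE_outcome b : OC_SPE v ord tb b -> forall h, reachable ord h ->
  (forall i, U b i h = surplus_sum i (unsold h)) /\
  (forall j k p, (j, k, p) \in outcome b h ->
     rival_value k j <= v k j /\ p = rival_value k j).
Proof.
move=> b_eq; elim/unsold_ind => [h E _|h ne IH rh].
  by split=> [i|j k p]; rewrite ?U_nil ?surplus_sum_nil ?outcome_nil.
have U_children i k : U b i (upd h (ord h) k) = surplus_sum i (unsold h :\ ord h).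
  by rewrite (IH k (reach_step k rh ne)).1 unsold_upd.
split=> [i|j k p]; first exact: U_stage_surplus_sum.
rewrite outcome_cons // in_cons => /orP [/eqP [-> -> ->]|]; last first.
  exact: (IH _ (reach_step _ rh ne)).2.
rewrite price_eq_rival_value //; split=> //.
exact: price_le_winner_value.
Qed.

End SequentialFirstPriceAuction.

Theorem mainTheorem5 (R : realType) (N M : finType) (v : N -> M -> R)
    (ord : alloc N M -> M) (tb : alloc N M -> M -> {set N} -> N) :
  (1 < #|N|)%N ->
  (forall i j, 0 <= v i j) ->
  valid_order ord ->
  max_tiebreak v tb ->
  (exists b : profile R N M, OC_SPE v ord tb b) /\
  (forall b : profile R N M, OC_SPE v ord tb b ->
     (forall j : M, exists w p, (j, w, p) \in outcome ord tb b (root_node N M)) /\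
     (forall (j : M) (w : N) (p : R),
        (j, w, p) \in outcome ord tb b (root_node N M) ->
        (forall i, v i j <= v w j) /\
        (exists2 i, i != w & p = v i j) /\
        (forall i, i != w -> v i j <= p))).
Proof.
move=> two_buyers v_ge0 ord_valid tb_max; split.
  by exists (capped_bids v ord); exact: capped_bids_OC_SPE.
move=> b b_eq; split=> [j|j w p jwp].
  by apply: (mem_outcome tb ord_valid); rewrite /unsold inE ffunE.
have [_ /(_ _ _ _ jwp) [le_rv_v ->]] :=
  OC_SPE_outcome two_buyers v_ge0 ord_valid tb_max b_eq (reach_root ord).
have [k kw rv_k] := rival_value_attained two_buyers v_ge0 w j.
split; last split.
- move=> i; have [->//|iw] := eqVneq i w.
  exact: le_trans (le_rival_value _ _ iw) le_rv_v.
- by exists k.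
- by move=> i iw; apply: le_rival_value.
Qed.
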